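(* Let $\mathfrak{B}\in\mathfrak{L}_{m,p}$ and let $Q_\Phi$ be a QDF. Then $\mathfrak{B}$ is dissipative with respect to $Q_\Phi$ if and only if there exists a symmetric positive semidefinite matrix $\Psi$ such that $Q_{\nabla\Psi}\le Q_\Phi$ on $\mathfrak{B}$.
   Context: Time axis $\mathbb{Z}_+$, $m,p\ge1$, $q=m+p$. $\mathfrak{L}_{m,p}$ is the set of behaviors $\mathfrak{B}=\{w=(u,y):\mathbb{Z}_+\to\mathbb{R}^{q}\mid\exists x:\mathbb{Z}_+\to\mathbb{R}^n,\ x(t+1)=Ax(t)+Bu(t),\ y(t)=Cx(t)+Du(t)\ \forall t\}$ for real matrices $A,B,C,D$. A QDF with coefficient matrix $\Psi\in\mathbb{S}^{(M+1)q}$ ($M\ge-1$, $M=-1$ giving the zero QDF) is $Q_\Psi(w)(t)=w_{[t,t+M]}^\top\Psi w_{[t,t+M]}$ with $w_{[t,t+M]}=\operatorname{col}(w(t),\dots,w(t+M))$. $\nabla\Psi:=\begin{bmatrix}0_{q,q}&0\\0&\Psi\end{bmatrix}-\begin{bmatrix}\Psi&0\\0&0_{q,q}\end{bmatrix}$, so $Q_{\nabla\Psi}(w)(t)=Q_\Psi(w)(t+1)-Q_\Psi(w)(t)$. ''$Q_1\le Q_2$ on $\mathfrak{B}$'' means $Q_1(w)(t)\le Q_2(w)(t)$ for all $w\in\mathfrak{B}$, $t\in\mathbb{Z}_+$. $\mathfrak{B}$ is dissipative with respect to $Q_\Phi$ if there exists a QDF $Q_\Psi$ with $Q_\Psi\ge0$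 on $\mathfrak{B}$ and $Q_{\nabla\Psi}\le Q_\Phi$ on $\mathfrak{B}$. *)

From HB Require Import structures.
From mathcomp Require Import all_boot all_order all_algebra.
From mathcomp Require Import reals.
Set Implicit Arguments. Unset Strict Implicit. Unset Printing Implicit Defensive.
Import Order.TTheory GRing.Theory Num.Theory.
Local Open Scope ring_scope.

Definition traj (R : realType) (q : nat) := nat -> 'cV[R]_q.

Definition iso_behavior (R : realType) (m p n : nat)
  (A : 'M[R]_n) (B : 'M[R]_(n, m)) (C : 'M[R]_(p, n)) (D : 'M[R]_(p, m))
  (w : traj R (m + p)) : Prop :=
  exists x : nat -> 'cV[R]_n, forall t : nat,
    x t.+1 = A *m x t + B *m usubmx (w t) /\
    dsubmx (w t) = C *m x t + D *m usubmx (w t).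

Definition in_Lmp (R : realType) (m p : nat) (Bh : traj R (m + p) -> Prop) : Prop :=
  exists (n : nat) (A : 'M[R]_n) (B : 'M[R]_(n, m)) (C : 'M[R]_(p, n))
         (D : 'M[R]_(p, m)), forall w, Bh w <-> iso_behavior A B C D w.

(* A QDF with coefficient matrix Psi in S^{(M+1)q} is encoded by N = M+1 >= 0
   (N = 0 is the zero QDF) and a matrix Psi : 'M_(N*q).  *)
Definition sym_mx (R : realType) (k : nat) (Psi : 'M[R]_k) : Prop := Psi^T = Psi.

Definition psd (R : realType) (k : nat) (Psi : 'M[R]_k) : Prop :=
  sym_mx Psi /\ forall v : 'cV[R]_k, 0 <= (v^T *m Psi *m v) 0 0.

(* w_[t, t+N-1] = col(w(t), ..., w(t+N-1)) : 'cV_(N*q); entry k*q+j = w(t+k)_j *)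
Definition window (R : realType) (q N : nat) (w : traj R q) (t : nat) : 'cV[R]_(N * q) :=
  (mxvec (\matrix_(k < N, j < q) w (t + k)%N j 0))^T.

Definition QDF (R : realType) (q N : nat) (Psi : 'M[R]_(N * q)) (w : traj R q) (t : nat) : R :=
  ((window N w t)^T *m Psi *m window N w t) 0 0.

Definition nabla (R : realType) (q N : nat) (Psi : 'M[R]_(N * q)) : 'M[R]_(N.+1 * q) :=
  castmx (esym (mulSn N q), esym (mulSn N q)) (block_mx (0 : 'M_(q, q)) 0 0 Psi)
  - castmx (esym (mulSnr N q), esym (mulSnr N q)) (block_mx Psi 0 0 (0 : 'M_(q, q))).

Definition qdf_le_on (R : realType) (q : nat) (Bh : traj R q -> Prop)
  (Q1 Q2 : traj R q -> nat -> R) : Prop :=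
  forall w, Bh w -> forall t : nat, Q1 w t <= Q2 w t.

Definition dissipative (R : realType) (q : nat) (Bh : traj R q -> Prop)
  (NPhi : nat) (Phi : 'M[R]_(NPhi * q)) : Prop :=
  exists (N : nat) (Psi : 'M[R]_(N * q)),
    sym_mx Psi /\
    qdf_le_on Bh (fun _ _ => 0) (QDF Psi) /\
    qdf_le_on Bh (QDF (nabla Psi)) (QDF Phi).

From HB Require Import structures.
From mathcomp Require Import all_boot all_order all_algebra.
From mathcomp Require Import reals.
From Stdlib Require Import Classical.
Set Implicit Arguments. Unset Strict Implicit. Unset Printing Implicit Defensive.
Import Order.TTheory GRing.Theory Num.Theory.
Local Open Scope ring_scope.

(* Only the "only if" direction needs an argument. The windows
   [w_[t, t+N-1]] of the trajectories of a linear shift-invariant behaviour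
   span a subspace, the row space of some matrix [S]. With the projector
   [P := pinvmx S *m S], the storage function [P Psi P^T] agrees with [Psi]
   on every window of the behaviour, so it satisfies the same dissipation
   inequality (the rate [Q_{nabla Psi}] is [Q_Psi(t+1) - Q_Psi(t)]); and it is
   positive semidefinite, because [v^T P] is always a window of the behaviour,
   where [Q_Psi >= 0]. *)

Lemma index_allpairs (T1 T2 : eqType) (s1 : seq T1) (s2 : seq T2) x1 x2 :
  x1 \in s1 -> x2 \in s2 ->
  index (x1, x2) [seq (a, b) | a <- s1, b <- s2] =
    (index x1 s1 * size s2 + index x2 s2)%N.
Proof.
move=> + x2s2; elim: s1 => // a s1 IHs1; rewrite inE allpairs_cons index_cat /=.
have pair_inj : injective (@pair T1 T2 a) by move=> u v [].
have [-> _ | neq_x1a x1s1] := eqVneq x1 a.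
  by rewrite (mem_map pair_inj) x2s2 (index_map pair_inj) mul0n.
rewrite ifN; last by apply/mapP => -[y _ [eq_x1a _]]; rewrite eq_x1a eqxx in neq_x1a.
by rewrite size_map IHs1 // mulSn addnA.
Qed.

Lemma mxvec_index_val m n (i : 'I_m) (j : 'I_n) :
  mxvec_index i j = (i * n + j)%N :> nat.
Proof.
rewrite /mxvec_index /= /enum_rank enum_rank_in.unlock insubdK /=.
  rewrite enumT unlock /= /prod_enum index_allpairs ?mem_enum //.
  by rewrite !index_enum_ord size_enum_ord.
by rewrite unfold_in /= cardE index_mem mem_enum.
Qed.

Section Windows.
Variables (R : realType) (q : nat).
Implicit Types (w : traj R q) (t : nat).

Lemma windowE N w t (i : 'I_(N * q)) (j : 'I_q) :
  j = (i %% q)%N :> nat -> window N w t i 0 = w (t + i %/ q)%N j 0.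
Proof.
rewrite /window mxE; case/mxvec_indexP: i => k l.
rewrite mxvecE mxE mxvec_index_val => eq_j.
have q_gt0 : (0 < q)%N by apply: leq_ltn_trans (ltn_ord l).
rewrite modnMDl modn_small // in eq_j.
rewrite divnMDl // divn_small // addn0.
by congr (w _ _ _); apply: val_inj.
Qed.

Hypothesis q_gt0 : (0 < q)%N.

Lemma window_cons N w t :
  window N.+1 w t = castmx (esym (mulSn N q), erefl) (col_mx (w t) (window N w t.+1)).
Proof.
apply/matrixP => i k; rewrite ord1 castmxE [RHS]mxE /= !cast_ord_id.
case: splitP => [i1 /= eq_i | i2 /= eq_i].
  rewrite (@windowE _ _ _ _ i1) eq_i ?modn_small //.
  by rewrite divn_small // addn0; congr (w _ _ _); apply: val_inj.
have i2q_lt : (i2 %% q < q)%N by rewrite ltn_pmod.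
rewrite (@windowE _ _ _ _ (Ordinal i2q_lt)) /=; last by rewrite eq_i modnDl.
rewrite (@windowE _ _ _ _ (Ordinal i2q_lt)) // eq_i.
by rewrite divnDl ?dvdnn // divnn q_gt0 addnA addn1.
Qed.

Lemma window_rcons N w t :
  window N.+1 w t = castmx (esym (mulSnr N q), erefl) (col_mx (window N w t) (w (t + N)%N)).
Proof.
apply/matrixP => i k; rewrite ord1 castmxE [RHS]mxE /= !cast_ord_id.
case: splitP => [i1 /= eq_i | i2 /= eq_i].
  have i1q_lt : (i1 %% q < q)%N by rewrite ltn_pmod.
  rewrite (@windowE _ _ _ _ (Ordinal i1q_lt)) /=; last by rewrite eq_i.
  by rewrite (@windowE _ _ _ _ (Ordinal i1q_lt)) // eq_i.
rewrite (@windowE _ _ _ _ i2) eq_i ?modnMDl ?modn_small //.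
by rewrite divnMDl // divn_small // addn0; congr (w _ _ _); apply: val_inj.
Qed.

End Windows.

Lemma qf_castmx (K : pzRingType) n n' (e : n = n') (X : 'M[K]_n) (v : 'cV_n) :
  (castmx (e, erefl) v)^T *m castmx (e, e) X *m castmx (e, erefl) v = v^T *m X *m v.
Proof. by case: n' / e; rewrite !castmx_id. Qed.

Lemma qf_block_drsub (K : pzRingType) n1 n2 (X : 'M[K]_n2) (a : 'cV_n1) b :
  (col_mx a b)^T *m block_mx 0 0 0 X *m col_mx a b = b^T *m X *m b.
Proof.
by rewrite tr_col_mx mul_row_block !mulmx0 !add0r mul_row_col mul0mx add0r.
Qed.

Lemma qf_block_ulsub (K : pzRingType) n1 n2 (X : 'M[K]_n1) a (b : 'cV_n2) :
  (col_mx a b)^T *m block_mx X 0 0 0 *m col_mx a b = a^T *m X *m a.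
Proof.
by rewrite tr_col_mx mul_row_block !mulmx0 !addr0 mul_row_col mul0mx addr0.
Qed.

Lemma QDF_nabla (R : realType) q N (Psi : 'M[R]_(N * q)) (w : traj R q) t :
  (0 < q)%N -> QDF (nabla Psi) w t = QDF Psi w t.+1 - QDF Psi w t.
Proof.
move=> q_gt0; rewrite /QDF /nabla mulmxBr mulmxBl [LHS]mxE [X in _ + X]mxE.
congr (_ - _).
  by rewrite window_cons // qf_castmx qf_block_drsub.
by rewrite window_rcons // qf_castmx qf_block_ulsub.
Qed.

Section LinearWindows.
Variables (R : realType) (q N : nat).

Lemma window0 t : window N (fun _ => 0 : 'cV[R]_q) t = 0.
Proof.
rewrite /window (_ : \matrix_(k, j) _ = 0) ?linear0 //.
by apply/matrixP => k j; rewrite !mxE.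
Qed.

Lemma windowP (c : R) (w1 w2 : traj R q) t :
  window N (fun s => c *: w1 s + w2 s) t = c *: window N w1 t + window N w2 t.
Proof.
rewrite /window (_ : \matrix_(k, j) _ = c *: \matrix_(k < N, j < q) w1 (t + k)%N j 0
                                      + \matrix_(k < N, j < q) w2 (t + k)%N j 0).
  by rewrite !linearP.
by apply/matrixP => k j; rewrite !mxE.
Qed.

Lemma window_shift (w : traj R q) t :
  window N (fun s => w (t + s)%N) 0 = window N w t.
Proof. by rewrite /window; congr (mxvec _)^T; apply/matrixP => k j; rewrite !mxE. Qed.

End LinearWindows.

Section LmpBehaviors.
Variables (R : realType) (m p : nat) (Bh : traj R (m + p) -> Prop).
Hypothesis Bh_Lmp : in_Lmp Bh.

Lemma in_Lmp0 : Bh (fun _ => 0).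
Proof.
have [n [A [B [C [D eqBh]]]]] := Bh_Lmp.
apply/eqBh; exists (fun _ => 0) => t.
by rewrite [usubmx 0]linear0 [dsubmx 0]linear0 !mulmx0 !addr0.
Qed.

Lemma in_LmpP (c : R) w1 w2 : Bh w1 -> Bh w2 -> Bh (fun t => c *: w1 t + w2 t).
Proof.
have [n [A [B [C [D eqBh]]]]] := Bh_Lmp.
move=> /eqBh[x1 sys1] /eqBh[x2 sys2]; apply/eqBh.
exists (fun t => c *: x1 t + x2 t) => t.
have [state1 out1] := sys1 t; have [state2 out2] := sys2 t.
rewrite [usubmx _]linearP [dsubmx _]linearP /= state1 state2 out1 out2.
rewrite !mulmxDr -!scalemxAr !scalerDr.
by split; rewrite addrACA.
Qed.

Lemma in_Lmp_shift k w : Bh w -> Bh (fun t => w (k + t)%N).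
Proof.
have [n [A [B [C [D eqBh]]]]] := Bh_Lmp.
by move=> /eqBh[x sys]; apply/eqBh; exists (fun t => x (k + t)%N) => t; rewrite addnS.
Qed.

End LmpBehaviors.

Lemma subspace_rowspace (F : fieldType) k (W : 'rV[F]_k -> Prop) :
  W 0 -> (forall c v1 v2, W v1 -> W v2 -> W (c *: v1 + v2)) ->
  exists r (S : 'M[F]_(r, k)), (forall u, W (u *m S)) /\ (forall v, W v -> (v <= S)%MS).
Proof.
(* Otherwise every row-free matrix with rows in [W] extends by one more row
   of [W]; iterating gives a row-free matrix with [k.+1] rows of width [k]. *)
move=> W0 WP; apply: NNPP => no_span.
suff free_in_W r : exists S : 'M[F]_(r, k), \rank S = r /\ forall u, W (u *m S).
  by have [S [rankS _]] := free_in_W k.+1; move: (rank_leq_col S); rewrite rankS ltnn.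
elim: r => [|r [S [rankS SW]]].
  by exists 0; rewrite mxrank0; split => // u; rewrite mulmx0.
have [v not_spanned] : exists v, ~ (W v -> (v <= S)%MS).
  by apply: not_all_ex_not => S_spans; apply: no_span; exists r, S.
have [Wv vNS] := imply_to_and _ _ not_spanned.
exists (col_mx v S); split.
  have S_sub : (S <= col_mx v S)%MS by rewrite -addsmxE addsmxSr.
  have: (S < col_mx v S)%MS.
    by rewrite ltmxE S_sub col_mx_sub; apply/negP => /andP[].
  rewrite ltmxErank => /andP[_]; rewrite rankS => rank_gt.
  by apply/eqP; rewrite eqn_leq rank_leq_row.
move=> u; have := mul_row_col (lsubmx (u : 'rV_(1 + r))) (rsubmx (u : 'rV_(1 + r))) v S.
by rewrite hsubmxK => ->; rewrite (mx11_scalar (lsubmx _)) mul_scalar_mx; apply: WP.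
Qed.

Lemma qf_congr (K : comPzRingType) k l (P : 'M[K]_(k, l)) X (z : 'cV_k) :
  z^T *m (P *m X *m P^T) *m z = (z^T *m P) *m X *m (z^T *m P)^T.
Proof. by rewrite trmx_mul trmxK !mulmxA. Qed.

Lemma sym_mx_congr (R : realType) k l (P : 'M[R]_(k, l)) X :
  sym_mx X -> sym_mx (P *m X *m P^T).
Proof. by rewrite /sym_mx !trmx_mul trmxK mulmxA => ->. Qed.

Section PsdStorage.
Variables (R : realType) (q : nat) (Bh : traj R q -> Prop).
Hypothesis Bh0 : Bh (fun _ => 0).
Hypothesis BhP : forall (c : R) w1 w2, Bh w1 -> Bh w2 -> Bh (fun t => c *: w1 t + w2 t).
Hypothesis Bh_shift : forall k w, Bh w -> Bh (fun t => w (k + t)%N).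
Variable N : nat.

Lemma windows_rowspace : exists r (S : 'M[R]_(r, N * q)),
  (forall u, exists2 w, Bh w & u *m S = (window N w 0)^T) /\
  (forall w t, Bh w -> ((window N w t)^T <= S)%MS).
Proof.
pose W v := exists2 w, Bh w & v = (window N w 0)^T.
have W0 : W 0 by exists (fun _ => 0); rewrite // window0 trmx0.
have WP c v1 v2 : W v1 -> W v2 -> W (c *: v1 + v2).
  move=> [w1 Bw1 ->] [w2 Bw2 ->]; exists (fun t => c *: w1 t + w2 t).
    exact: BhP.
  by rewrite windowP linearP.
have [r [S [SW WS]]] := subspace_rowspace W0 WP.
exists r, S; split => // w t Bw; apply: WS.
by exists (fun s => w (t + s)%N); rewrite ?window_shift //; apply: Bh_shift.
Qed.

Lemma psd_storage_eq_on (Psi : 'M[R]_(N * q)) :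
  sym_mx Psi -> qdf_le_on Bh (fun _ _ => 0) (QDF Psi) ->
  exists Psi' : 'M[R]_(N * q), psd Psi' /\ forall w t, Bh w -> QDF Psi' w t = QDF Psi w t.
Proof.
move=> sym_Psi Psi_ge0; have [r [S [SW WS]]] := windows_rowspace.
pose P := pinvmx S *m S.
exists (P *m Psi *m P^T); split; [split=> [|v] | move=> w t Bw].
- exact: sym_mx_congr.
- have [w Bw window_w] := SW (v^T *m pinvmx S).
  have proj_v : v^T *m P = (window N w 0)^T by rewrite mulmxA.
  by rewrite qf_congr proj_v (trmxK (window N w 0)); apply: (Psi_ge0 w Bw 0).
- by rewrite /QDF qf_congr mulmxA mulmxKpV ?WS // trmxK.
Qed.

End PsdStorage.

Theorem lemma1 (R : realType) (m p : nat) (hm : (1 <= m)%N) (hp : (1 <= p)%N)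
  (Bh : traj R (m + p) -> Prop) (hB : in_Lmp Bh)
  (NPhi : nat) (Phi : 'M[R]_(NPhi * (m + p))) (hPhi : sym_mx Phi) :
  dissipative Bh Phi <->
  exists (N : nat) (Psi : 'M[R]_(N * (m + p))),
    psd Psi /\ qdf_le_on Bh (QDF (nabla Psi)) (QDF Phi).
Proof.
have q_gt0 : (0 < m + p)%N by rewrite addn_gt0 hm.
split=> [[N [Psi [sym_Psi [Psi_ge0 dissip]]]] | [N [Psi [[sym_Psi Psi_ge0] dissip]]]].
  have [|||Psi' [psd_Psi' eq_on_Bh]] := psd_storage_eq_on _ _ _ sym_Psi Psi_ge0.
  - exact: in_Lmp0.
  - exact: in_LmpP.
  - exact: in_Lmp_shift.
  exists N, Psi'; split => // w Bw t.
  by rewrite QDF_nabla // !eq_on_Bh // -QDF_nabla //; apply: dissip.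
by exists N, Psi; split=> //; split=> // w _ t; apply: Psi_ge0.
Qed.
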